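(* For every integer $d\ge 2$ there exist a constant $c_d>0$ (one may take $c_d=(5d^{d/2})^{-1}$) and $p_0(d)$ such that for every prime $p\ge p_0(d)$ there is a set $B\subset\mathbb{F}_p^d$ with $|B|\ge c_d\,p^{\frac{d+2}{2}}$ such that $x\cdot y\ne 0$ for all $x,y\in B$ (including $x=y$).
   Context: For $u,v\in\mathbb{F}_p^d$, $u\cdot v=\sum_{i=1}^d u_iv_i$ computed in $\mathbb{F}_p$. *)

From HB Require Import structures.
From mathcomp Require Import all_boot all_order all_algebra.
Set Implicit Arguments. Unset Strict Implicit. Unset Printing Implicit Defensive.
Import GRing.Theory.
Local Open Scope ring_scope.

Definition dotp (p d : nat) (u v : 'rV['F_p]_d) : 'F_p :=
  (\sum_(i < d) (u ord0 i * v ord0 i)%R)%R.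

(* The set consists of the multiples  l * (a_1 + 1, ..., a_d + 1)  with l in F_p^* and
   0 <= a_i < m, where  d m^2 < p <= 4 d m^2.  All dot products are l l' times an integer
   in (0, p), hence nonzero.  Requiring the first two entries of the integer vector to be
   coprime makes the representation unique (two such vectors proportional over F_p are
   proportional over Z, as their cross products are < p), and at least a quarter of the
   m^d integer vectors are such, because  sum_{k >= 2} 1/k^2 <= 3/4.  This gives
   (p - 1) m^d / 4  >=  c_d p^((d+2)/2)  vectors. *)

From mathcomp Require Import all_boot all_order all_algebra.
From Stdlib Require Import Reals Lra Lia.
From mathcomp Require Import zify.
Import ssrnat GRing.Theory.
Set Implicit Arguments. Unset Strict Implicit. Unset Printing Implicit Defensive.

(* Scaled form of  sum_(k = 2 .. n + 2) 1 / k^2 <= 3/4 - 1/(n + 2). *)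
Lemma sum_le_inv_sqr_telescope (t : nat -> nat) (P : nat) :
  (forall k, 1 < k -> t k * k ^ 2 <= P) ->
  forall n, 4 * n.+2 * \sum_(2 <= k < n.+3) t k + 4 * P <= 3 * n.+2 * P.
Proof.
move=> tP; elim=> [|n IHn].
  by rewrite big_nat1; have := tP 2 isT; lia.
rewrite big_nat_recr //=; set s := \sum_(2 <= k < n.+3) t k in IHn *.
have IH' := leq_mul (leqnn (n.+3 ^ 2)) IHn.
have tb := leq_mul (leqnn (4 * n.+2)) (tP n.+3 isT).
rewrite -(leq_pmul2l (isT : 0 < n.+2 * n.+3)).
nia.
Qed.

Lemma sum_le_inv_sqr (t : nat -> nat) (P n : nat) :
  (forall k, 1 < k -> t k * k ^ 2 <= P) ->
  4 * \sum_(2 <= k < n) t k <= 3 * P.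
Proof.
move=> tP; case: n => [|[|[|n]]]; try by rewrite big_geq.
have := sum_le_inv_sqr_telescope tP n; rewrite -(leq_pmul2l (isT : 0 < n.+2)); nia.
Qed.

Lemma exists_box_side p d : 0 < d -> d < p ->
  exists m, d * m ^ 2 < p <= 4 * d * m ^ 2.
Proof.
move=> d0 dp; have [sq_le lt_sq] := Nat.sqrt_specif ((p - 1) %/ d).
set s := Nat.sqrt _ in sq_le lt_sq; exists s.
have lo : s * s * d <= p - 1 by rewrite -leq_divRL //; lia.
have hi : p - 1 < s.+1 * s.+1 * d by rewrite -ltn_divLR //; lia.
by apply/andP; split; nia.
Qed.

Lemma coprime_cross_eq a b a' b' : coprime a b -> coprime a' b' ->
  a * b' = b * a' -> a = a'.
Proof.
move=> co co' cross; apply/eqP; rewrite eqn_dvd.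
by rewrite -(Gauss_dvdr _ co) -cross dvdn_mulr // -(Gauss_dvdr _ co') mulnC cross dvdn_mull.
Qed.

Lemma card_bigcup_seq_le (I : Type) (T : finType) (r : seq I) (F : I -> {set T}) :
  #|\bigcup_(i <- r) F i| <= \sum_(i <- r) #|F i|.
Proof.
elim: r => [|i r IHr]; first by rewrite !big_nil cards0.
by rewrite !big_cons (leq_trans (leq_card_setU _ _)) // leq_add2l.
Qed.

Lemma sum_dvdn_succ m k : 0 < k -> \sum_(i < m) (k %| i.+1) = m %/ k.
Proof.
move=> k0; elim: m => [|m IHm]; first by rewrite big_ord0 div0n.
by rewrite big_ord_recr /= IHm divnS // addnC.
Qed.

Lemma card_dvdn_succ m k : 0 < k -> #|[pred a : 'I_m | k %| a.+1]| = m %/ k.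
Proof.
move=> k0; rewrite -sum1_card big_mkcond /= -(sum_dvdn_succ m k0).
by apply: eq_bigr => i _; rewrite inE; case: (k %| i.+1).
Qed.

Section CoprimeBox.
Variables (d m : nat) (i0 i1 : 'I_d).
Hypothesis i01 : i0 != i1.

(* [f] stands for the integer vector with entries [(f i).+1] in [1, m]. *)
Definition coprime_box := [set f : {ffun 'I_d -> 'I_m} | coprime (f i0).+1 (f i1).+1].

Definition common_divisor_box k :=
  [set f : {ffun 'I_d -> 'I_m} | (k %| (f i0).+1) && (k %| (f i1).+1)].

Lemma card_common_divisor_box k : 0 < k -> #|common_divisor_box k| * k ^ 2 <= m ^ d.
Proof.
move=> k0; pose on01 i := (i == i0) || (i == i1).
pose F i := if on01 i then [pred a : 'I_m | k %| a.+1] else predT.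
have -> : #|common_divisor_box k| = #|finfun.family F|.
  apply: eq_card => f; rewrite inE; apply/andP/familyP => [[f0 f1] i | fF].
    by rewrite /F /on01; case: ifP => // /orP [] /eqP ->.
  by split; [have := fF i0 | have := fF i1]; rewrite /F /on01 eqxx ?orbT.
rewrite card_family foldrE big_map big_enum /=.
have -> : k ^ 2 = \prod_(i < d) (if on01 i then k else 1).
  rewrite (bigD1 i0) // (bigD1 i1) /=; last by rewrite eq_sym.
  by rewrite big1 ?muln1 /on01 ?eqxx ?orbT ?mulnn // => i /andP [/negbTE -> /negbTE ->].
rewrite (eq_bigl xpredT) // -big_split.
rewrite -[in X in _ <= X](card_ord d) -prod_nat_const.
apply: leq_prod => i _.
by rewrite /F; case: ifP => _ /=; rewrite ?card_dvdn_succ ?leq_divM ?card_ord ?muln1.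
Qed.

Lemma card_coprime_box : m ^ d <= 4 * #|coprime_box|.
Proof.
have partition : #|coprime_box| + #|~: coprime_box| = m ^ d.
  by rewrite cardsC card_ffun !card_ord.
have cover : ~: coprime_box \subset \bigcup_(2 <= k < m.+1) common_divisor_box k.
  apply/subsetP => f; rewrite !inE => nco.
  set g := gcdn (f i0).+1 (f i1).+1.
  have g1 : 1 < g by rewrite ltn_neqAle eq_sym nco gcdn_gt0.
  have gm : g < m.+1.
    by rewrite ltnS (leq_trans (dvdn_leq _ (dvdn_gcdl _ _))).
  rewrite (bigD1_seq g) ?mem_index_iota ?g1 ?iota_uniq //= !inE.
  by rewrite dvdn_gcdl dvdn_gcdr.
have := leq_trans (subset_leq_card cover) (card_bigcup_seq_le _ _).
have := sum_le_inv_sqr m.+1 (fun k k1 => card_common_divisor_box (ltnW k1)).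
lia.
Qed.

End CoprimeBox.

Section ScaledBox.
Variables (p d m : nat).
Hypothesis p_prime : prime p.
Hypothesis box_small : d * m ^ 2 < p.
Local Open Scope ring_scope.

Lemma Fp_natr_inj a b : (a < p)%N -> (b < p)%N -> (a%:R : 'F_p) = b%:R -> a = b.
Proof.
move=> ap bp /(congr1 val) /=.
by rewrite !val_Fp_nat ?prime_gt1 // !modn_small.
Qed.

Lemma Fp_natr_neq0 n : (0 < n < p)%N -> (n%:R : 'F_p) != 0.
Proof.
move=> /andP [n0 np]; rewrite -(dvdn_pcharf (pchar_Fp p_prime)).
by apply/negP => /(dvdn_leq n0); rewrite leqNgt np.
Qed.

Definition scaled_vec (l : 'F_p) (f : {ffun 'I_d -> 'I_m}) : 'rV['F_p]_d :=
  \row_i (l * (f i).+1%:R).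

Lemma dotp_scaled_vec l l' f g :
  dotp (scaled_vec l f) (scaled_vec l' g) = l * l' * (\sum_i (f i).+1 * (g i).+1)%N%:R.
Proof.
rewrite /dotp natr_sum mulr_sumr; apply: eq_bigr => i _.
by rewrite !mxE natrM mulrACA.
Qed.

Lemma box_dotn_bounds (f g : {ffun 'I_d -> 'I_m}) :
  (0 < d)%N -> (0 < \sum_i (f i).+1 * (g i).+1 < p)%N.
Proof.
move=> d0; apply/andP; split; first by rewrite (bigD1 (Ordinal d0)) //= addn_gt0.
apply: leq_ltn_trans box_small.
have -> : (d * m ^ 2 = \sum_(i < d) m ^ 2)%N by rewrite sum_nat_const card_ord.
by apply: leq_sum => i _; rewrite -mulnn leq_mul.
Qed.

Lemma scaled_vec_inj (i0 i1 : 'I_d) (l l' : 'F_p) (f g : {ffun 'I_d -> 'I_m}) :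
  l != 0 -> l' != 0 -> f \in coprime_box m i0 i1 -> g \in coprime_box m i0 i1 ->
  scaled_vec l f = scaled_vec l' g -> l = l' /\ f = g.
Proof.
rewrite !inE => l0 l'0 cof cog eq_lf.
have eq_coord i : l * (f i).+1%:R = l' * (g i).+1%:R.
  by have := congr1 (fun v : 'rV_d => v ord0 i) eq_lf; rewrite !mxE.
have m2p : (m ^ 2 < p)%N.
  by apply: leq_ltn_trans box_small; rewrite leq_pmull // (leq_ltn_trans _ (ltn_ord i0)).
have prod_lt i j (h h' : {ffun 'I_d -> 'I_m}) : ((h i).+1 * (h' j).+1 < p)%N.
  by apply: leq_ltn_trans m2p; rewrite -mulnn leq_mul.
have cross i j : ((f i).+1 * (g j).+1 = (f j).+1 * (g i).+1)%N.
  apply: Fp_natr_inj; rewrite ?prod_lt //.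
  apply: (mulfI (mulf_neq0 l0 l'0)); rewrite !natrM.
  rewrite -mulrACA (eq_coord i) -(eq_coord j) mulrACA.
  by rewrite [l' * l]mulrC [(g i).+1%:R * _]mulrC.
have f0g0 := coprime_cross_eq cof cog (cross i0 i1).
have f_eq_g : f = g.
  apply/ffunP => i; apply/val_inj/eqP.
  by rewrite -eqSS -(eqn_pmul2r (ltn0Sn (g i0))) -(cross i0 i) f0g0 mulnC.
split=> //; apply: (mulIf (_ : (f i0).+1%:R != 0)); last by rewrite eq_coord f_eq_g.
apply: Fp_natr_neq0; rewrite ltn0Sn /=.
by rewrite (leq_ltn_trans (leq_pmulr _ (ltn0Sn (f i0))) (prod_lt i0 i0 f f)).
Qed.

Definition scaled_box (i0 i1 : 'I_d) : {set 'rV['F_p]_d} :=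
  [set scaled_vec x.1 x.2 | x in setX [set~ 0] (coprime_box m i0 i1)].

Lemma card_scaled_box i0 i1 : #|scaled_box i0 i1| = ((p - 1) * #|coprime_box m i0 i1|)%N.
Proof.
rewrite card_in_imset; first by rewrite cardsX cardsC1 card_Fp // subn1.
move=> [l f] [l' g] /setXP [/= l0 cof] /setXP [/= l'0 cog] /= eq_lf.
rewrite !inE in l0 l'0.
by have [-> ->] := scaled_vec_inj l0 l'0 cof cog eq_lf.
Qed.

Lemma scaled_box_dotp_neq0 i0 i1 x y :
  x \in scaled_box i0 i1 -> y \in scaled_box i0 i1 -> dotp x y != 0.
Proof.
move=> /imsetP [[l f] /setXP [/= l0 _] ->] /imsetP [[l' g] /setXP [/= l'0 _] ->].
rewrite !inE in l0 l'0; rewrite dotp_scaled_vec !mulf_neq0 // Fp_natr_neq0 //.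
exact: box_dotn_bounds (leq_ltn_trans (leq0n _) (ltn_ord i0)).
Qed.

End ScaledBox.

Lemma INR_expn m n : INR (m ^ n) = (INR m ^ n)%R.
Proof. by elim: n => [|n IHn]; rewrite ?expn0 // expnS mult_INR IHn. Qed.

Local Open Scope R_scope.

Lemma Rpower_half_le_pow (x : R) (m d : nat) :
  0 < x -> x <= INR m ^ 2 -> Rpower x (INR d / 2) <= INR m ^ d.
Proof.
move=> x0 xm; have m0 : 0 < INR m.
  by case: (Rle_lt_or_eq_dec 0 (INR m) (pos_INR m)) => // m0; rewrite -m0 /= in xm; lra.
have -> : INR m ^ d = Rpower (INR m ^ 2) (INR d / 2).
  rewrite -(Rpower_pow 2 _ m0) -(Rpower_pow d _ m0) Rpower_mult /=; f_equal; field.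
apply: Rle_Rpower_l; last by split.
by apply: Rmult_le_pos; [apply: pos_INR | lra].
Qed.

(* Weaker than the paper's c_d = 1 / (5 d^(d/2)); the statement only asks for some c > 0. *)
Definition density_const (d : nat) : R := Rpower (INR (4 * d)) (- (INR d / 2)) / 8.

Lemma density_const_gt0 d : 0 < density_const d.
Proof. by apply: Rdiv_lt_0_compat; [apply: exp_pos | lra]. Qed.

Lemma density_const_Rpower (p d : nat) : (0 < d)%N -> (0 < p)%N ->
  density_const d * Rpower (INR p) ((INR d + 2) / 2)
  = INR p / 8 * Rpower (INR p / INR (4 * d)) (INR d / 2).
Proof.
move=> d0 p0; have p0R : 0 < INR p by apply/lt_0_INR/ltP.
have d0R : 0 < INR (4 * d) by apply/lt_0_INR/ltP; lia.
rewrite /density_const /Rpower /Rdiv ln_mult ?ln_Rinv //; last exact: Rinv_0_lt_compat.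
have -> : (INR d + 2) * / 2 * ln (INR p) = ln (INR p) + INR d * / 2 * ln (INR p) by field.
rewrite exp_plus exp_ln // Rmult_plus_distr_l exp_plus.
have -> : INR d * / 2 * - ln (INR (4 * d)) = - (INR d * / 2) * ln (INR (4 * d)) by ring.
ring.
Qed.

Lemma density_bound (p d m N : nat) : (0 < d)%N -> (2 <= p)%N ->
  (p <= 4 * d * m ^ 2)%N -> (m ^ d <= 4 * N)%N ->
  density_const d * Rpower (INR p) ((INR d + 2) / 2) <= INR ((p - 1) * N).
Proof.
move=> d0 p2 pm mN; rewrite density_const_Rpower //; last by lia.
have p0 : 0 < INR p by apply/lt_0_INR/ltP; lia.
have d0R : 0 < INR (4 * d) by apply/lt_0_INR/ltP; lia.
have box : Rpower (INR p / INR (4 * d)) (INR d / 2) <= INR m ^ d.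
  apply: Rpower_half_le_pow; first exact: Rdiv_lt_0_compat.
  apply/(Rmult_le_reg_r (INR (4 * d))) => //; rewrite /Rdiv Rmult_assoc Rinv_l; last lra.
  by rewrite Rmult_1_r -INR_expn -mult_INR multE mulnC; apply: le_INR; apply/leP.
have count : INR m ^ d <= 4 * INR N.
  by rewrite -INR_expn; have := le_INR _ _ (leP mN); rewrite mult_INR /=; lra.
have p_pred : INR p <= 2 * INR (p - 1).
  by have := le_INR _ _ (leP (_ : p <= 2 * (p - 1))%N); rewrite mult_INR /=; apply; lia.
have := Rmult_le_compat_l _ _ _ (Rlt_le _ _ p0) (Rle_trans _ _ _ box count).
have := Rmult_le_compat_r _ _ _ (pos_INR N) p_pred.
rewrite -multE !mult_INR; lra.
Qed.

Theorem theorem2p4 :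
  forall d : nat, (2 <= d)%N ->
  exists c : R, (0 < c)%R /\
  exists p0 : nat, forall p : nat, prime p -> (p0 <= p)%N ->
  exists B : {set 'rV['F_p]_d},
    (c * Rpower (INR p) ((INR d + 2) / 2) <= INR #|B|)%R /\
    (forall x y, x \in B -> y \in B -> dotp x y != GRing.zero).
Proof.
move=> d d2; exists (density_const d); split; first exact: density_const_gt0.
exists d.+1 => p p_prime dp.
have d0 : (0 < d)%N := ltnW d2.
have [m /andP [small large]] := exists_box_side d0 dp.
pose i0 : 'I_d := Ordinal d0; pose i1 : 'I_d := Ordinal d2.
exists (scaled_box p m i0 i1); split.
  rewrite (card_scaled_box p_prime small); apply: (density_bound d0 _ large).
    exact: leq_trans dp.
  exact: card_coprime_box.
exact: scaled_box_dotp_neq0.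
Qed.
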